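(* Let $M$ be a free $\mathbb{T}$-module with a finite $\mathbb{T}$-basis, $V$ its associated complex vector space, and $(\cdot,\cdot)$ a bicomplex scalar product on $M$ which is hyperbolic positive and closed on $V$. Then for all $\widehat X,\widehat Y\in M$, $$(\widehat X,\widehat Y)=\mathbf{e_1}(\widehat X_{\mathbf{e_1}},\widehat Y_{\mathbf{e_1}})+\mathbf{e_2}(\widehat X_{\mathbf{e_2}},\widehat Y_{\mathbf{e_2}})$$ and $P_k\big((\widehat X,\widehat Y)\big)=(\widehat X_{\mathbf{e_k}},\widehat Y_{\mathbf{e_k}})\in\mathbb{C}(\mathbf{i_1})$ for $k=1,2$.
   Context: Bicomplex numbers: $\mathbb{T}=\{z_1+z_2\mathbf{i_2}: z_1,z_2\in\mathbb{C}(\mathbf{i_1})\}$, $\mathbb{C}(\mathbf{i_1})=\{x+y\mathbf{i_1}: x,y\in\mathbb{R}\}$, $\mathbf{i_1}^2=\mathbf{i_2}^2=-1$, $\mathbf{i_1}\mathbf{i_2}=\mathbf{i_2}\mathbf{i_1}=\mathbf{j}$, $\mathbf{j}^2=1$ (commutative). Hyperbolic numbers $\mathbb{D}=\{x+y\mathbf{j}:x,y\in\mathbb{R}\}$. Idempotents $\mathbf{e_1}=(1+\mathbf{j})/2$, $\mathbf{e_2}=(1-\mathbf{j})/2$. Every $w=z_1+z_2\mathbf{i_2}$ is uniquely $w=(z_1-z_2\mathbf{i_1})\mathbf{e_1}+(z_1+z_2\mathbf{i_1})\mathbf{e_2}$; set $P_1(w)=z_1-z_2\mathbf{i_1}$,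 $P_2(w)=z_1+z_2\mathbf{i_1}$. Conjugation: $(z_1+z_2\mathbf{i_2})^{\dagger_3}=\overline{z_1}-\overline{z_2}\mathbf{i_2}$. $\mathbb{D}^+=\{a\mathbf{e_1}+b\mathbf{e_2}: a,b\ge 0\}$. $M$ has $\mathbb{T}$-basis $\{\widehat m_1,\dots,\widehat m_n\}$, $V=\{\sum x_l\widehat m_l: x_l\in\mathbb{C}(\mathbf{i_1})\}$; for $\widehat X=\sum x_l\widehat m_l$ with $x_l=x_{1l}\mathbf{e_1}+x_{2l}\mathbf{e_2}$, $x_{kl}\in\mathbb{C}(\mathbf{i_1})$, put $\widehat X_{\mathbf{e_k}}=\sum_l x_{kl}\widehat m_l\in V$. A bicomplex scalar product is a map $(\cdot,\cdot):M\times M\to\mathbb{T}$ with: $(\widehat X,\widehat Y_1+\widehat Y_2)=(\widehat X,\widehat Y_1)+(\widehat X,\widehat Y_2)$; $(\widehat X,\alpha\widehat Y)=\alpha(\widehat X,\widehat Y)$ for $\alpha\in\mathbb{T}$; $(\widehat X,\widehat Y)=(\widehat Y,\widehat X)^{\dagger_3}$; $(\widehat X,\widehat X)=0\iff\widehat X=0$. Hyperbolic positive: $(\widehat X,\widehat X)\in\mathbb{D}^+$ for all $\widehat X\in M$. Closed on $V$: $(\widehat X,\widehat Y)\in\mathbb{C}(\mathbf{i_1})$ for all $\widehat X,\widehat Y\in V$. *)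

From HB Require Import structures.
From mathcomp Require Import all_boot all_order all_algebra.
From mathcomp Require Import complex.
From mathcomp Require Import reals.
Set Implicit Arguments. Unset Strict Implicit. Unset Printing Implicit Defensive.
Import Order.TTheory GRing.Theory Num.Theory.
Local Open Scope ring_scope.
Local Open Scope complex_scope.

Section Bicomplex.
Variable R : realType.
Notation C := (R[i]).

(* w = z1 + z2 i2 with z1, z2 in C(i1) *)
Record bicomplex := BC { bc1 : C ; bc2 : C }.

Definition bc_add (w v : bicomplex) : bicomplex :=
  BC (bc1 w + bc1 v) (bc2 w + bc2 v).
(* (z1 + z2 i2)(w1 + w2 i2) = (z1 w1 - z2 w2) + (z1 w2 + z2 w1) i2 *)
Definition bc_mul (w v : bicomplex) : bicomplex :=
  BC (bc1 w * bc1 v - bc2 w * bc2 v) (bc1 w * bc2 v + bc2 w * bc1 v).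
Definition bc_of (z : C) : bicomplex := BC z 0.
Definition bc0 : bicomplex := bc_of 0.
(* j = i1 i2 *)
Definition bc_j : bicomplex := BC 0 'i.
(* e1 = (1+j)/2, e2 = (1-j)/2 *)
Definition bc_e1 : bicomplex := BC (1/2) ('i / 2).
Definition bc_e2 : bicomplex := BC (1/2) (- ('i / 2)).
Definition bc_conj3 (w : bicomplex) : bicomplex := BC (conjc (bc1 w)) (- conjc (bc2 w)).
Definition P1 (w : bicomplex) : C := bc1 w - bc2 w * 'i.
Definition P2 (w : bicomplex) : C := bc1 w + bc2 w * 'i.
Definition Pk (k : bool) (w : bicomplex) : C := if k then P1 w else P2 w.
Definition ek (k : bool) : bicomplex := if k then bc_e1 else bc_e2.

Definition in_Ci1 (w : bicomplex) : Prop := bc2 w = 0.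
Definition in_Dplus (w : bicomplex) : Prop :=
  exists a b : R, 0 <= a /\ 0 <= b /\
    w = bc_add (bc_mul (bc_of a%:C) bc_e1) (bc_mul (bc_of b%:C) bc_e2).

(* The free T-module M with T-basis m_1..m_n, identified with coordinate
   vectors: X = sum_l x_l m_l  <->  (fun l => x_l). *)
Definition bmod (n : nat) := 'I_n -> bicomplex.
Definition bmod_add n (X Y : bmod n) : bmod n := fun l => bc_add (X l) (Y l).
Definition bmod_scale n (a : bicomplex) (X : bmod n) : bmod n :=
  fun l => bc_mul a (X l).
Definition bmod0 n : bmod n := fun _ => bc0.
Definition in_V n (X : bmod n) : Prop := forall l, in_Ci1 (X l).
(* X_{e_k} = sum_l x_{kl} m_l  where x_l = x_{1l} e1 + x_{2l} e2 *)
Definition ecomp n (k : bool) (X : bmod n) : bmod n := fun l => bc_of (Pk k (X l)).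

Definition bicomplex_scalar_product n (sp : bmod n -> bmod n -> bicomplex) : Prop :=
  [/\ (forall X Y1 Y2, sp X (bmod_add Y1 Y2) = bc_add (sp X Y1) (sp X Y2)),
      (forall X Y a, sp X (bmod_scale a Y) = bc_mul a (sp X Y)),
      (forall X Y, sp X Y = bc_conj3 (sp Y X)) &
      (forall X, sp X X = bc0 <-> X = @bmod0 n)].

Definition hyperbolic_positive n (sp : bmod n -> bmod n -> bicomplex) : Prop :=
  forall X, in_Dplus (sp X X).

Definition closed_on_V n (sp : bmod n -> bmod n -> bicomplex) : Prop :=
  forall X Y, in_V X -> in_V Y -> in_Ci1 (sp X Y).

End Bicomplex.

(* The idempotent coordinates (P1, P2) identify T with C x C as rings, with
   e1 = (1, 0), e2 = (0, 1), and dagger_3 becoming coordinatewise complex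
   conjugation.  Expanding (e1 X_e1 + e2 X_e2, e1 Y_e1 + e2 Y_e2) by
   sesquilinearity, the k-th coordinate of (X, Y) therefore only sees
   (X_ek, Y_ek), and closedness on V makes the latter a complex number, which is
   its own k-th coordinate. *)
From HB Require Import structures.
From mathcomp Require Import all_boot all_order all_algebra.
From mathcomp Require Import complex.
From mathcomp Require Import reals.
From mathcomp Require Import ring.
From Stdlib Require Import FunctionalExtensionality.
Set Implicit Arguments. Unset Strict Implicit. Unset Printing Implicit Defensive.
Import Order.TTheory GRing.Theory Num.Theory.
Local Open Scope ring_scope.

Section IdempotentCoordinates.
Local Open Scope complex_scope.
Variable R : realType.
Local Notation e1 := (bc_e1 R).
Local Notation e2 := (bc_e2 R).

Lemma mul_ii : ('i : R[i]) * 'i = -1.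
Proof. by rewrite -expr2 sqr_i. Qed.

Lemma conjcD (x y : R[i]) : conjc (x + y) = conjc x + conjc y.
Proof. exact: rmorphD. Qed.

Lemma conjcM (x y : R[i]) : conjc (x * y) = conjc x * conjc y.
Proof. exact: rmorphM. Qed.

Lemma bc_PkE (w : bicomplex R) :
  w = BC ((P1 w + P2 w) / 2) ('i * (P1 w - P2 w) / 2).
Proof. by case: w => a b; rewrite /P1 /P2 /=; congr BC; field: mul_ii. Qed.

Lemma Pk_inj (w v : bicomplex R) : (forall k, Pk k w = Pk k v) -> w = v.
Proof.
move=> eqPk; rewrite (bc_PkE w) (bc_PkE v).
by move: (eqPk true) (eqPk false) => /= -> ->.
Qed.

Lemma Pk_add k (w v : bicomplex R) : Pk k (bc_add w v) = Pk k w + Pk k v.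
Proof. by case: k; rewrite /= /P1 /P2 /=; ring. Qed.

Lemma Pk_mul k (w v : bicomplex R) : Pk k (bc_mul w v) = Pk k w * Pk k v.
Proof. by case: k; rewrite /= /P1 /P2 /=; ring: mul_ii. Qed.

Lemma Pk_conj3 k (w : bicomplex R) : Pk k (bc_conj3 w) = conjc (Pk k w).
Proof.
case: w => [[a b] [c d]]; apply/eqP; rewrite eq_complex.
by case: k; apply/andP; split; apply/eqP => /=; ring.
Qed.

Lemma Pk_bc_of k (z : R[i]) : Pk k (bc_of z) = z.
Proof. by case: k; rewrite /= /P1 /P2 /= mul0r ?subr0 ?addr0. Qed.

Lemma Pk_e1 k : Pk k e1 = k%:R.
Proof. by case: k; rewrite /= /P1 /P2 /=; field: mul_ii. Qed.

Lemma Pk_e2 k : Pk k e2 = (~~ k)%:R.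
Proof. by case: k; rewrite /= /P1 /P2 /=; field: mul_ii. Qed.

Lemma Pk_idem_sum k (s t : bicomplex R) :
  Pk k (bc_add (bc_mul e1 s) (bc_mul e2 t)) = Pk k (if k then s else t).
Proof.
by rewrite Pk_add !Pk_mul Pk_e1 Pk_e2; case: k; rewrite /= mul1r mul0r ?addr0 ?add0r.
Qed.

Lemma bc_idem_decomp (w : bicomplex R) :
  w = bc_add (bc_mul e1 (bc_of (P1 w))) (bc_mul e2 (bc_of (P2 w))).
Proof. by apply: Pk_inj => k; rewrite Pk_idem_sum; case: k; rewrite Pk_bc_of. Qed.

Lemma bc_of_Pk_Ci1 k (w : bicomplex R) : in_Ci1 w -> bc_of (Pk k w) = w.
Proof.
by case: w => a b; rewrite /in_Ci1 /= => ->; rewrite Pk_bc_of.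
Qed.

End IdempotentCoordinates.

Section SesquilinearForm.
Variables (R : realType) (n : nat).

Lemma bmod_idem_decomp (X : bmod R n) :
  X = bmod_add (bmod_scale (bc_e1 R) (ecomp true X))
               (bmod_scale (bc_e2 R) (ecomp false X)).
Proof. by apply: functional_extensionality => l; apply: bc_idem_decomp. Qed.

Variable sp : bmod R n -> bmod R n -> bicomplex R.
Hypothesis sp_addr :
  forall X Y1 Y2, sp X (bmod_add Y1 Y2) = bc_add (sp X Y1) (sp X Y2).
Hypothesis sp_scaler : forall X Y a, sp X (bmod_scale a Y) = bc_mul a (sp X Y).
Hypothesis sp_conj3 : forall X Y, sp X Y = bc_conj3 (sp Y X).

Lemma Pk_sp_addl k X1 X2 Y :
  Pk k (sp (bmod_add X1 X2) Y) = Pk k (sp X1 Y) + Pk k (sp X2 Y).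
Proof.
by rewrite sp_conj3 sp_addr Pk_conj3 Pk_add conjcD -!Pk_conj3 -!sp_conj3.
Qed.

Lemma Pk_sp_scalel k a X Y :
  Pk k (sp (bmod_scale a X) Y) = conjc (Pk k a) * Pk k (sp X Y).
Proof.
by rewrite sp_conj3 sp_scaler Pk_conj3 Pk_mul conjcM -!Pk_conj3 -!sp_conj3.
Qed.

Lemma Pk_sp_ecomp k X Y : Pk k (sp X Y) = Pk k (sp (ecomp k X) (ecomp k Y)).
Proof.
rewrite {1}(bmod_idem_decomp X) {1}(bmod_idem_decomp Y).
rewrite !Pk_sp_addl !Pk_sp_scalel !sp_addr !sp_scaler !Pk_add !Pk_mul Pk_e1 Pk_e2.
by rewrite !conjc_nat; case: k; rewrite /= !(mul1r, mul0r, addr0, add0r).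
Qed.

End SesquilinearForm.

Theorem mainTheorem6 (R : realType) (n : nat)
    (sp : bmod R n -> bmod R n -> bicomplex R) :
  bicomplex_scalar_product sp -> hyperbolic_positive sp -> closed_on_V sp ->
  forall X Y : bmod R n,
    sp X Y = bc_add (bc_mul (bc_e1 R) (sp (ecomp true X) (ecomp true Y)))
                    (bc_mul (bc_e2 R) (sp (ecomp false X) (ecomp false Y)))
    /\ (forall k : bool,
          bc_of (Pk k (sp X Y)) = sp (ecomp k X) (ecomp k Y)
          /\ in_Ci1 (sp (ecomp k X) (ecomp k Y))).
Proof.
move=> [sp_addr sp_scaler sp_conj3 _] _ closedV X Y.
have Pk_sp k := Pk_sp_ecomp sp_addr sp_scaler sp_conj3 k X Y.
have sp_ecomp_Ci1 k : in_Ci1 (sp (ecomp k X) (ecomp k Y)) by apply: closedV.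
split=> [|k]; last by rewrite Pk_sp bc_of_Pk_Ci1.
by apply: Pk_inj => k; rewrite Pk_sp Pk_idem_sum; case: k.
Qed.
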